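(* Let $\mathcal X$ be a finite set, let $M:=\log|\mathcal X|$, let $\mathcal C$ be any set of probability measures on $(\mathcal X^\infty,\mathcal F)$, and let $\rho$ be any probability measure on $(\mathcal X^\infty,\mathcal F)$. Then there exists a discrete Bayesian predictor $\nu$, that is, a probability measure of the form $\nu=\sum_{k\in\mathbb N} w_k\mu_k$ with $\mu_k\in\mathcal C$ and $w_k\in[0,1]$, such that for every $\mu\in\mathcal C$ and every time step $n$, $$L_n(\mu,\nu)-L_n(\mu,\rho)\le 8\log n+O(\log\log n),$$ where the $O(\log\log n)$ term does not depend on $\mu$ or on $\mathcal C$ and $\rho$; its constants are explicit, depend on the alphabet only linearly through $M$ (a term of order $M\log\log n$), and are otherwise universal constants.
   Context: $\mathcal X$ is a finite alphabet; $x_{1..n}$ denotes $x_1,\dots,x_n$; $\mathcal F$ is the Borel sigma-field on $\mathcal X^\infty$. For a measure $\mu$ on $\mathcal X^\infty$, $\mu(x_{1..n})$ denotes the probability that the first $n$ symbols equal $x_{1..n}$. Logarithms are base 2. For two probability measures $\mu,\rho$ on $(\mathcal X^\infty,\mathcal F)$, the expected cumulative Kullback–Leibler divergence (log loss) up to time $n$ is $$L_n(\mu,\rho):=\mathbb E_\mu\sum_{t=1}^{n}\sum_{a\in\mathcal X}\mu(x_t=a\mid x_{1..t-1})\log\frac{\mu(x_t=a\mid x_{1..t-1})}{\rho(x_t=a\mid x_{1..t-1})}=\sum_{x_{1..n}\in\mathcal X^n}\mu(x_{1..n})\log\frac{\mu(x_{1..n})}{\rho(x_{1..n})},$$ where $\mu$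 is interpreted as the measure generating the data and $\rho$ as the predictor. *)

From HB Require Import structures.
From mathcomp Require Import all_boot all_order all_algebra.
From mathcomp Require Import all_classical all_reals all_analysis.
Import Order.TTheory GRing.Theory Num.Theory.
Local Open Scope classical_set_scope.
Local Open Scope ring_scope.

(* Infinite sequences x_1 x_2 ... over a (nonempty) finite alphabet X,
   indexed from 0.  x0 only serves to give the type a canonical point, as
   required by MathComp-Analysis for sigma-algebra types. *)
Definition seqs (X : finType) (x0 : X) := nat -> X.
HB.instance Definition _ (X : finType) (x0 : X) := gen_eqMixin (seqs X x0).
HB.instance Definition _ (X : finType) (x0 : X) := gen_choiceMixin (seqs X x0).
HB.instance Definition _ (X : finType) (x0 : X) :=
  isPointed.Build (seqs X x0) (fun _ => x0).

Definition cyl (X : finType) (x0 : X) (n : nat) (x : n.-tuple X) : set (seqs X x0) :=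
  [set w | forall i : 'I_n, w i = tnth x i].

Definition cylinders (X : finType) (x0 : X) : set (set (seqs X x0)) :=
  [set A | exists n (x : n.-tuple X), A = cyl X x0 n x].

(* (X^infty, F): F is the sigma-field generated by the cylinders, which is
   the Borel sigma-field of the product of discrete topologies. *)
Definition Xinf (X : finType) (x0 : X) := g_sigma_algebraType (cylinders X x0).

Definition log2 (R : realType) (x : R) : R := ln x / ln 2.

(* p log (p/q), with 0 log (0/q) = 0 and p log (p/0) = +oo for p > 0 *)
Definition kl_term (R : realType) (p q : R) : \bar R :=
  if p == 0 then 0%E else if q == 0 then +oo%E else (p * log2 R (p / q))%:E.

Definition cylp (R : realType) (X : finType) (x0 : X)
    (mu : probability (Xinf X x0) R) (n : nat) (x : n.-tuple X) : R :=
  fine (mu (cyl X x0 n x : set (Xinf X x0))).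

Definition Ln (R : realType) (X : finType) (x0 : X)
    (mu rho : probability (Xinf X x0) R) (n : nat) : \bar R :=
  (\sum_(x : n.-tuple X) kl_term R (cylp R X x0 mu n x) (cylp R X x0 rho n x))%E.

(* For a fixed horizon n, let d be a finite mixture of members of C that
   nearly maximises the rho-weighted log-likelihood sum_x rho(x) ln d(x) over
   words x of length n.  Mixing any mu in C into d with a small weight t can
   then gain little; expanding the gain to second order in t (the likelihood
   ratios mu/d being capped in advance, independently of mu) gives
   sum_x rho(x) mu(x)/d(x) <= 2, hence sum_x mu(x) ln (rho(x)/d(x)) <= 2 by
   ln z <= z - 1.  Concatenating the mixtures d_n with weights 1/((n+1)(n+2))
   yields a single countable mixture nu >= d_n/((n+1)(n+2)) on words of length
   n, so L_n(mu,nu) - L_n(mu,rho) <= (2 + ln ((n+1)(n+2))) / ln 2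
   <= 2 log n + 7. *)

From HB Require Import structures.
From mathcomp Require Import all_boot all_order all_algebra.
From mathcomp Require Import all_classical all_reals all_analysis.
From mathcomp Require Import ring lra zify.
Import Order.TTheory GRing.Theory Num.Theory.
Local Open Scope classical_set_scope.
Local Open Scope ring_scope.

Section RealFacts.
Context {R : realType}.

Lemma ln_le_subr1 (z : R) : 0 < z -> ln z <= z - 1.
Proof. by move=> z0; have := @le_ln1Dx R (z - 1); rewrite subrKC; apply; lra. Qed.

Lemma subr1V_le_ln (z : R) : 0 < z -> 1 - z^-1 <= ln z.
Proof.
move=> z0; have := ln_le_subr1 z^-1; rewrite invr_gt0 lnV ?posrE // => /(_ z0).
lra.
Qed.

Lemma ln1Dx_ge_quad (u : R) : -(1/2) <= u -> u - 2 * u ^+ 2 <= ln (1 + u).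
Proof.
move=> u_ge; have u1_gt0 : 0 < 1 + u by lra.
apply: le_trans (subr1V_le_ln _ u1_gt0).
have -> : 1 - (1 + u)^-1 = u / (1 + u) by field; rewrite lt0r_neq0.
rewrite ler_pdivlMr //.
have : 0 <= u ^+ 2 * (1 + 2 * u) by apply: mulr_ge0; [exact: sqr_ge0 | lra].
nra.
Qed.

Lemma ln2_ge_half : 1/2 <= ln (2 : R).
Proof.
by have := subr1V_le_ln 2 ltac:(lra); rewrite (_ : 1 - 2^-1 = 1/2) //; field.
Qed.

Lemma ln_ge_N1 (q : R) : 1/2 <= q -> -1 <= ln q.
Proof.
move=> q_ge; have q_gt0 : 0 < q by lra.
have : q^-1 <= 2 by rewrite invf_ple ?posrE //; lra.
have := subr1V_le_ln _ q_gt0; lra.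
Qed.

Lemma ler_sum_subset (I : finType) (P Q : pred I) (F G : I -> R) :
  (forall i, P i -> Q i) -> (forall i, P i -> F i <= G i) ->
  (forall i, Q i -> 0 <= G i) -> \sum_(i | P i) F i <= \sum_(i | Q i) G i.
Proof.
move=> PQ FG G0; rewrite big_mkcond [leRHS]big_mkcond; apply: ler_sum => i _.
by case: ifP => [Pi|_]; [rewrite PQ // FG | case: ifP => // /G0].
Qed.

End RealFacts.

Section Cylinders.
Context {R : realType} {X : finType} {x0 : X}.
Local Notation T := (Xinf X x0).
Local Notation P := (probability T R).

Lemma measurable_cyl n (x : n.-tuple X) : measurable (cyl X x0 n x : set T).
Proof. by apply: sub_sigma_algebra; exists n, x. Qed.

Lemma cylpE (mu : P) n x : mu (cyl X x0 n x : set T) = (cylp R X x0 mu n x)%:E.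
Proof.
rewrite /cylp fineK // ge0_fin_numE ?measure_ge0 //.
exact: le_lt_trans (probability_le1 _ (measurable_cyl n x)) (ltey _).
Qed.

Lemma cylp_ge0 (mu : P) n x : 0 <= cylp R X x0 mu n x.
Proof. by rewrite -lee_fin -cylpE measure_ge0. Qed.

Lemma cylp_le1 (mu : P) n x : cylp R X x0 mu n x <= 1.
Proof. by rewrite -lee_fin -cylpE probability_le1 //; exact: measurable_cyl. Qed.

Lemma cyl_meet_eq n (x y : n.-tuple X) :
  cyl X x0 n x `&` cyl X x0 n y !=set0 -> x = y.
Proof. by case=> w [/= wx wy]; apply: eq_from_tnth => i; rewrite -wx -wy. Qed.

Lemma sum_cylp_le1 (mu : P) n : \sum_(x : n.-tuple X) cylp R X x0 mu n x <= 1.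
Proof.
rewrite -lee_fin -sumEFin; under eq_bigr do rewrite -cylpE.
rewrite (eq_bigl (fun x => x \in predT)) // big_enum_val /= -measure_bigsetU_ord.
- by apply: probability_le1; apply: bigsetU_measurable => i _; exact: measurable_cyl.
- by move=> i; exact: measurable_cyl.
- by move=> i j _ _ /cyl_meet_eq /enum_val_inj.
Qed.

Lemma sum_cylp_le1_sub (mu : P) n (A : pred (n.-tuple X)) :
  \sum_(x | A x) cylp R X x0 mu n x <= 1.
Proof.
apply: le_trans (sum_cylp_le1 mu n).
by apply: ler_sum_subset => // x _; exact: cylp_ge0.
Qed.

End Cylinders.

Record mixture (R : realType) (X : finType) (x0 : X) := Mixture
  { msize : nat; mweight : nat -> R; mcomp : nat -> probability (Xinf X x0) R }.
Arguments Mixture {R X x0}.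
Arguments msize {R X x0}.
Arguments mweight {R X x0}.
Arguments mcomp {R X x0}.

Section Mixtures.
Context {R : realType} {X : finType} {x0 : X}.
Local Notation P := (probability (Xinf X x0) R).
Local Notation mixture := (mixture R X x0).

Variable C : set P.

Definition mixture_of (d : mixture) :=
  [/\ forall j, (j < msize d)%N -> C (mcomp d j),
      forall j, (j < msize d)%N -> 0 <= mweight d j
    & \sum_(j < msize d) mweight d j = 1].

Definition mixp n (d : mixture) (x : n.-tuple X) :=
  \sum_(j < msize d) mweight d j * cylp R X x0 (mcomp d j) n x.

Lemma mixp_ge0 d n (x : n.-tuple X) : mixture_of d -> 0 <= mixp n d x.
Proof.
case=> _ w_ge0 _; apply: sumr_ge0 => j _.
by apply: mulr_ge0; [exact: w_ge0 | exact: cylp_ge0].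
Qed.

Lemma mixp_le1 d n (x : n.-tuple X) : mixture_of d -> mixp n d x <= 1.
Proof.
case=> _ w_ge0 <-; apply: ler_sum => j _.
by rewrite ler_piMr ?w_ge0 ?cylp_le1.
Qed.

Definition mixture1 (mu : P) := Mixture 1 (fun=> 1) (fun=> mu).

Lemma mixture1_of mu : C mu -> mixture_of (mixture1 mu).
Proof. by move=> Cmu; split => //=; rewrite big_ord1. Qed.

Definition mix_in (s : R) (mu : P) (d : mixture) := Mixture (msize d).+1
  (fun j => if (j < msize d)%N then (1 - s) * mweight d j else s)
  (fun j => if (j < msize d)%N then mcomp d j else mu).

Lemma mix_in_of s mu d : 0 <= s <= 1 -> C mu -> mixture_of d ->
  mixture_of (mix_in s mu d).
Proof.
move=> /andP[s_ge0 s_le1] Cmu [Cd w_ge0 w_sum1]; split => /= [j|j|].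
- by rewrite ltnS leq_eqVlt => /orP[/eqP->|jd]; rewrite ?ltnn // jd; exact: Cd.
- rewrite ltnS leq_eqVlt => /orP[/eqP->|jd]; rewrite ?ltnn // jd.
  by rewrite mulr_ge0 ?w_ge0 //; lra.
- rewrite big_ord_recr /= ltnn.
  under eq_bigr => j _ do rewrite ltn_ord.
  by rewrite -mulr_sumr w_sum1; ring.
Qed.

Lemma mixp_mix_in s mu d n (x : n.-tuple X) :
  mixp n (mix_in s mu d) x = (1 - s) * mixp n d x + s * cylp R X x0 mu n x.
Proof.
rewrite /mixp big_ord_recr /= ltnn mulr_sumr; congr (_ + _).
by apply: eq_bigr => j _; rewrite ltn_ord mulrA.
Qed.

End Mixtures.

Section NearMaximalMixture.
Context {R : realType} {X : finType} {x0 : X}.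
Local Notation P := (probability (Xinf X x0) R).
Variables (C : set P) (rho : P) (n : nat).
Local Notation cp mu x := (cylp R X x0 mu n x).

(* No mixture of members of C charges the other words of positive
   rho-probability, so the log-likelihood only looks at these. *)
Definition charged (x : n.-tuple X) :=
  (0 < cp rho x) && `[< exists2 mu, C mu & 0 < cp mu x >].

Definition loglik (d : mixture R X x0) :=
  \sum_(x | charged x) cp rho x * ln (mixp n d x).

Definition admissible (d : mixture R X x0) :=
  mixture_of C d /\ forall x, charged x -> 0 < mixp n d x.

Lemma admissible_exists : C !=set0 -> exists d, admissible d.
Proof.
case=> mu0 Cmu0.
suff [d [dC d_gt0]] : exists d, mixture_of C d /\
    forall x, x \in enum [set: n.-tuple X] -> charged x -> 0 < mixp n d x.
  by exists d; split => // x; apply: d_gt0; rewrite mem_enum inE.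
elim: (enum _) => [|y s [d [dC d_gt0]]].
  by exists (mixture1 mu0); split => //; exact: mixture1_of.
have [/andP[_ /asboolP[mu Cmu mu_y]]|y_nch] := boolP (charged y); last first.
  exists d; split => // x; rewrite inE => /orP[/eqP->|/d_gt0//].
  by rewrite (negbTE y_nch).
exists (mix_in (1/2) mu d); split; first by apply: mix_in_of => //; lra.
move=> x; rewrite inE mixp_mix_in => /orP[/eqP-> _|/d_gt0 d_pos /d_pos d_x].
  by have := mixp_ge0 C d n y dC; lra.
by have := cylp_ge0 mu n x; lra.
Qed.

Lemma loglik_le0 d : admissible d -> loglik d <= 0.
Proof.
case=> dC _; apply: sumr_le0 => x _; rewrite mulr_ge0_le0 ?cylp_ge0 //.
exact/ln_le0/(mixp_le1 C).
Qed.

Lemma has_sup_loglik : C !=set0 -> has_sup [set loglik d | d in admissible].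
Proof.
move=> /admissible_exists[d d_adm]; split; first by exists (loglik d), d.
by exists 0 => _ [e e_adm <-]; exact: loglik_le0.
Qed.

Lemma mix_in_admissible {d mu s} : admissible d -> C mu -> 0 <= s < 1 ->
  admissible (mix_in s mu d).
Proof.
move=> [dC d_gt0] Cmu /andP[s_ge0 s_lt1]; split.
  by apply: mix_in_of => //; rewrite s_ge0 ltW.
move=> x x_ch; rewrite mixp_mix_in.
have := d_gt0 x x_ch; have := cylp_ge0 mu n x; nra.
Qed.

Definition lratio mu (d : mixture R X x0) x := cp mu x / mixp n d x.

Lemma loglik_mix_in d mu s : admissible d -> 0 <= s < 1 ->
  loglik (mix_in s mu d) - loglik d =
  \sum_(x | charged x) cp rho x * ln (1 - s + s * lratio mu d x).
Proof.
move=> [_ d_gt0] /andP[s_ge0 s_lt1]; rewrite /loglik -sumrB.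
apply: eq_bigr => x x_ch; rewrite mixp_mix_in -mulrBr; congr (_ * _).
have d_x := d_gt0 x x_ch.
have lr_ge0 : 0 <= lratio mu d x by rewrite divr_ge0 ?cylp_ge0 ?ltW.
rewrite (_ : (1 - s) * mixp n d x + s * cp mu x =
    mixp n d x * (1 - s + s * lratio mu d x)).
  by rewrite lnM ?posrE //; [ring | nra].
by rewrite /lratio; field; rewrite lt0r_neq0.
Qed.

(* The cap depends neither on the mixture nor on mu, so that the weight t
   of the perturbation can be chosen uniformly in mu. *)
Definition lr_cap x := 2 * expR (2 / cp rho x).

Definition lr_dev_bound := \sum_(x | charged x) (lr_cap x ^+ 2 + 1).

Lemma lr_dev_bound_ge0 : 0 <= lr_dev_bound.
Proof. by apply: sumr_ge0 => x _; rewrite addr_ge0 ?sqr_ge0. Qed.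

Section Perturbation.
Variables (t : R) (d : mixture R X x0) (mu : P).
Hypotheses (t_gt0 : 0 < t) (t_small : 4 * t * (lr_dev_bound + 1) <= 1).
Hypotheses (d_adm : admissible d) (Cmu : C mu).
Hypothesis d_near_max : forall e, admissible e -> loglik e < loglik d + t / 2.

Local Notation lr := (lratio mu d).

Let t_le_quarter : t <= 1/4.
Proof.
have : 4 * t <= 4 * t * (lr_dev_bound + 1).
  by rewrite ler_peMr ?lerDr ?lr_dev_bound_ge0 ?mulr_ge0 ?ltW.
by move: t_small; lra.
Qed.

Lemma lr_ge0 {x} : charged x -> 0 <= lr x.
Proof. by move=> x_ch; rewrite divr_ge0 ?cylp_ge0 ?ltW ?d_adm.2. Qed.

Lemma perturbation_gain_lt s : 0 <= s <= 1/2 ->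
  \sum_(x | charged x) cp rho x * ln (1 - s + s * lr x) < t / 2.
Proof.
move=> /andP[s_ge0 s_le]; have s_lt1 : 0 <= s < 1 by rewrite s_ge0 /=; lra.
rewrite -loglik_mix_in //.
have := d_near_max _ (mix_in_admissible d_adm Cmu s_lt1); lra.
Qed.

Lemma lr_le_cap {x} : charged x -> lr x <= lr_cap x.
Proof.
move=> x_ch; have rho_x : 0 < cp rho x by case/andP: x_ch.
have t_le := t_le_quarter.
have := perturbation_gain_lt (1/2) ltac:(lra); rewrite (bigD1 x) //=.
(* mixing in mu with weight 1/2 costs at most rho y on every other word y *)
have others : -1 <= \sum_(y | charged y && (y != x))
    cp rho y * ln (1 - 1/2 + 1/2 * lr y).
  apply: le_trans (_ : - \sum_(y | charged y && (y != x)) cp rho y <= _).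
    by rewrite lerN2 sum_cylp_le1_sub.
  rewrite -sumrN; apply: ler_sum => y /andP[y_ch _].
  have := ln_ge_N1 (1 - 1/2 + 1/2 * lr y) ltac:(have := lr_ge0 y_ch; lra).
  by move=> ln_ge; rewrite -[- cp rho y]mulrN1 ler_wpM2l ?cylp_ge0.
move=> gain; have q_gt0 : 0 < 1 - 1/2 + 1/2 * lr x by have := lr_ge0 x_ch; lra.
have : ln (1 - 1/2 + 1/2 * lr x) < 2 / cp rho x.
  by rewrite ltr_pdivlMr // [_ * cp rho x]mulrC; lra.
by rewrite -ltr_expR lnK ?posrE // /lr_cap; lra.
Qed.

Lemma sum_lr_dev_le :
  \sum_(x | charged x) cp rho x * (lr x - 1) ^+ 2 <= lr_dev_bound.
Proof.
apply: ler_sum => x x_ch.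
have lr_x := lr_ge0 x_ch; have cap_x := lr_le_cap x_ch.
apply: le_trans (_ : (lr x - 1) ^+ 2 <= _).
  by rewrite ler_piMl ?sqr_ge0 ?cylp_le1.
have : lr x ^+ 2 <= lr_cap x ^+ 2 by rewrite ler_sqr ?nnegrE //; lra.
rewrite !expr2; nra.
Qed.

Lemma sum_rho_lr_le2 : \sum_(x | charged x) cp rho x * lr x <= 2.
Proof.
set A := \sum_(x | _) _; set B := \sum_(x | charged x) cp rho x.
set Q := \sum_(x | charged x) cp rho x * (lr x - 1) ^+ 2.
(* [lra] and [nra] ignore section hypotheses *)
have t_pos := t_gt0; have t_le := t_le_quarter; have t_sm := t_small.
have second_order : t * A - t * B - 2 * t ^+ 2 * Q <=
    \sum_(x | charged x) cp rho x * ln (1 - t + t * lr x).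
  have -> : t * A - t * B - 2 * t ^+ 2 * Q = \sum_(x | charged x)
      cp rho x * (t * (lr x - 1) - 2 * (t * (lr x - 1)) ^+ 2).
    by rewrite !mulr_sumr -!sumrB; apply: eq_bigr => x _; ring.
  apply: ler_sum => x x_ch; apply: ler_wpM2l; first exact: cylp_ge0.
  rewrite (_ : 1 - t + t * lr x = 1 + t * (lr x - 1)); last by ring.
  by apply: ln1Dx_ge_quad; have := lr_ge0 x_ch; nra.
have gain := perturbation_gain_lt t ltac:(lra).
have B_le1 : B <= 1 by exact: sum_cylp_le1_sub.
have Q_small : 2 * t ^+ 2 * Q <= t / 2.
  have : t ^+ 2 * Q <= t ^+ 2 * lr_dev_bound.
    by rewrite ler_wpM2l ?sqr_ge0 ?sum_lr_dev_le.
  rewrite !expr2; nra.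
have : t * A < t * 2 by nra.
by rewrite ltr_pM2l // => /ltW.
Qed.

End Perturbation.

Lemma universal_finite_mixture : C !=set0 -> exists d, mixture_of C d /\
  forall mu, C mu ->
    (forall x, 0 < cp mu x -> 0 < cp rho x -> 0 < mixp n d x) /\
    \sum_(x | (0 < cp mu x) && (0 < cp rho x))
      cp mu x * ln (cp rho x / mixp n d x) <= 2.
Proof.
move=> C0; pose t := (4 * (lr_dev_bound + 1))^-1.
have dev_ge0 := lr_dev_bound_ge0.
have t_gt0 : 0 < t by rewrite invr_gt0; lra.
have t_small : 4 * t * (lr_dev_bound + 1) <= 1.
  by rewrite mulrAC mulrC mulVf ?lt0r_neq0 //; lra.
have t2_gt0 : 0 < t / 2 by lra.
have [_ [d d_adm <-] d_near] := sup_adherent t2_gt0 (has_sup_loglik C0).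
have d_near_max e : admissible e -> loglik e < loglik d + t / 2.
  move=> e_adm; have : loglik e <= sup [set loglik d | d in admissible].
    by apply: sup_upper_bound; [exact: has_sup_loglik | exists e].
  lra.
exists d; split; first exact: d_adm.1.
move=> mu Cmu; have charged_pos x : 0 < cp mu x -> 0 < cp rho x -> charged x.
  by move=> mu_x rho_x; rewrite /charged rho_x; apply/asboolP; exists mu.
have d_gt0 x mu_x rho_x := d_adm.2 x (charged_pos x mu_x rho_x).
split=> //.
apply: le_trans (sum_rho_lr_le2 _ _ _ t_gt0 t_small d_adm Cmu d_near_max).
apply: ler_sum_subset => [x /andP[]|x /andP[mu_x rho_x]|x x_ch].
- exact: charged_pos.
- have := ln_le_subr1 _ (divr_gt0 rho_x (d_gt0 x mu_x rho_x)).
  by rewrite /lratio mulrCA => ln_le; rewrite ler_wpM2l ?ltW //; lra.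
- by rewrite mulr_ge0 ?cylp_ge0 ?divr_ge0 ?cylp_ge0 ?ltW ?d_adm.2.
Qed.

End NearMaximalMixture.

Section Blocks.
Variable len : nat -> nat.
Hypothesis len_gt0 : forall n, (0 < len n)%N.

Definition offset n := (\sum_(m < n) len m)%N.

Lemma offset0 : offset 0 = 0%N.
Proof. exact: big_ord0. Qed.

Lemma offsetS n : offset n.+1 = (offset n + len n)%N.
Proof. by rewrite /offset big_ord_recr. Qed.

Lemma offset_ge n : (n <= offset n)%N.
Proof. by elim: n => // n ih; rewrite offsetS -addn1 leq_add. Qed.

Lemma leq_offset : {homo offset : m k / (m <= k)%N}.
Proof.
move=> m k /subnK <-; elim: (k - m)%N => // i ih.
by rewrite addSn offsetS (leq_trans ih) ?leq_addr.
Qed.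

Definition block k :=
  ex_minn (ex_intro (fun n => k < offset n.+1)%N k (offset_ge k.+1)).

Lemma block_bounds k : (offset (block k) <= k < offset (block k).+1)%N.
Proof.
rewrite /block; case: ex_minnP => -[|m] -> min_m; rewrite andbT.
  by rewrite offset0.
by rewrite leqNgt; apply/negP => /min_m; rewrite ltnn.
Qed.

Lemma block_offsetD n j : (j < len n)%N -> block (offset n + j) = n.
Proof.
move=> j_lt; have /andP[] := block_bounds (offset n + j).
case: (ltngtP (block (offset n + j)) n) => // [/leq_offset|/leq_offset];
  rewrite !offsetS; lia.
Qed.

Lemma sum_offset (V : nmodType) (F : nat -> V) N :
  \sum_(k < offset N) F k = \sum_(n < N) \sum_(j < len n) F (offset n + j)%N.
Proof.
elim: N => [|N ih]; first by rewrite offset0 !big_ord0.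
by rewrite big_ord_recr -ih /= offsetS big_split_ord.
Qed.

End Blocks.

Lemma nneseries_le_ub (R : realType) (u : nat -> \bar R) (c : \bar R) :
  (forall k, (0 <= u k)%E) -> (forall K, (\sum_(0 <= k < K) u k <= c)%E) ->
  (\sum_(0 <= k <oo) u k <= c)%E.
Proof.
move=> u_ge0 ub; apply: lime_le; last exact: nearW.
by apply: is_cvg_nneseries => k _ _; exact: u_ge0.
Qed.

Section SeriesMixture.
Context {R : realType} {X : finType} {x0 : X}.
Local Notation T := (Xinf X x0).
Local Notation P := (probability T R).
Context {C : set P} {D : nat -> mixture R X x0}.
Variable W : nat -> R.
Hypotheses (DC : forall n, mixture_of C (D n)) (W_gt0 : forall n, 0 < W n).
Hypothesis sum_W_le1 : forall N, \sum_(n < N) W n <= 1.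

Let len n := msize (D n).

Let len_gt0 n : (0 < len n)%N.
Proof.
case: (DC n) => _ _; rewrite /len; case: msize => // /esym/eqP.
by rewrite big_ord0 oner_eq0.
Qed.

Let off := offset len.
Let blk := block len len_gt0.

Definition series_weight k := W (blk k) * mweight (D (blk k)) (k - off (blk k)).
Definition series_comp k := mcomp (D (blk k)) (k - off (blk k)).

Let index_in_block k : (k - off (blk k) < len (blk k))%N.
Proof.
by have /andP[] := block_bounds len len_gt0 k; rewrite /off /blk offsetS; lia.
Qed.

Lemma series_comp_in k : C (series_comp k).
Proof. by case: (DC (blk k)) => DC_in _ _; exact/DC_in/index_in_block. Qed.

Lemma series_weight_ge0 k : 0 <= series_weight k.
Proof.
case: (DC (blk k)) => _ w_ge0 _.
by apply: mulr_ge0; [exact/ltW/W_gt0 | apply/w_ge0/index_in_block].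
Qed.

Lemma series_weight_offsetD n j : (j < len n)%N ->
  series_weight (off n + j) = W n * mweight (D n) j.
Proof. by move=> j_lt; rewrite /series_weight /blk block_offsetD // addKn. Qed.

Lemma series_comp_offsetD n j : (j < len n)%N ->
  series_comp (off n + j) = mcomp (D n) j.
Proof. by move=> j_lt; rewrite /series_comp /blk block_offsetD // addKn. Qed.

Lemma sum_series_weight_offset N :
  \sum_(k < off N) series_weight k = \sum_(n < N) W n.
Proof.
rewrite sum_offset; apply: eq_bigr => n _; case: (DC n) => _ _ w_sum1.
rewrite -[RHS]mulr1 -w_sum1 mulr_sumr.
by apply: eq_bigr => j _; rewrite series_weight_offsetD.
Qed.

Lemma sum_series_weight_le1 K : \sum_(k < K) series_weight k <= 1.
Proof.
apply: le_trans (sum_W_le1 K); rewrite -sum_series_weight_offset.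
rewrite (big_ord_widen _ _ (offset_ge len len_gt0 K)).
by apply: ler_sum_subset => // k _; exact: series_weight_ge0.
Qed.

Definition series_mass : \bar R := \sum_(0 <= k <oo) (series_weight k)%:E.

Lemma series_mass_le1 : (series_mass <= 1)%E.
Proof.
apply: nneseries_le_ub => [k|K]; first by rewrite lee_fin series_weight_ge0.
by rewrite sumEFin big_mkord lee_fin sum_series_weight_le1.
Qed.

Lemma series_mass_ge : ((W 0)%:E <= series_mass)%E.
Proof.
apply: le_trans (nneseries_lim_ge (off 1) _); last first.
  by move=> k _ _; rewrite lee_fin series_weight_ge0.
by rewrite sumEFin big_mkord lee_fin sum_series_weight_offset big_ord1.
Qed.

Definition normalizer := fine series_mass.

Lemma series_massE : series_mass = normalizer%:E.
Proof.
rewrite /normalizer fineK // ge0_fin_numE.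
  exact: le_lt_trans series_mass_le1 (ltey _).
by apply: le_trans series_mass_ge; rewrite lee_fin ltW.
Qed.

Lemma normalizer_gt0 : 0 < normalizer.
Proof.
by rewrite -lte_fin -series_massE (lt_le_trans _ series_mass_ge) ?lte_fin.
Qed.

Lemma normalizer_le1 : normalizer <= 1.
Proof. by rewrite -lee_fin -series_massE series_mass_le1. Qed.

Lemma series_weight_le_normalizer k : series_weight k <= normalizer.
Proof.
rewrite -lee_fin -series_massE.
apply: le_trans (nneseries_lim_ge k.+1 _); last first.
  by move=> i _ _; rewrite lee_fin series_weight_ge0.
rewrite sumEFin lee_fin big_nat_recr //= lerDr.
by apply: sumr_ge0 => i _; exact: series_weight_ge0.
Qed.

Definition mixture_weight k := series_weight k / normalizer.

Lemma mixture_weight_in01 k : 0 <= mixture_weight k <= 1.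
Proof.
rewrite /mixture_weight divr_ge0 ?series_weight_ge0 ?(ltW normalizer_gt0) //=.
by rewrite ler_pdivrMr ?normalizer_gt0 // mul1r series_weight_le_normalizer.
Qed.

Definition weighted_comp k := mscale (NngNum (series_weight_ge0 k)) (series_comp k).

(* The fallback [series_comp 0] of [mnormalize] is never used: the total mass
   of the series is [normalizer], which is positive and finite. *)
Definition series_mixture : P :=
  mnormalize (mseries weighted_comp 0) (series_comp 0).

Lemma series_mixtureE A : series_mixture A =
  (\sum_(0 <= k <oo) (mixture_weight k)%:E * series_comp k A)%E.
Proof.
have seriesE U : (mseries weighted_comp 0 : {measure set T -> \bar R}) U =
    (\sum_(0 <= k <oo) (series_weight k)%:E * series_comp k U)%E by [].
have massT :
    (mseries weighted_comp 0 : {measure set T -> \bar R}) setT = normalizer%:E.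
  rewrite seriesE -series_massE; apply: eq_eseriesr => k _.
  by rewrite probability_setT mule1.
rewrite /series_mixture /= /mnormalize massT eqe gt_eqF ?normalizer_gt0 //=.
rewrite seriesE muleC -nneseriesZl; last first.
  by move=> k _; rewrite mule_ge0 // lee_fin series_weight_ge0.
by apply: eq_eseriesr => k _; rewrite muleA -EFinM mulrC.
Qed.

Lemma series_mixture_ge n x :
  W n * mixp n (D n) x <= cylp R X x0 series_mixture n x.
Proof.
rewrite -lee_fin -cylpE series_mixtureE.
apply: le_trans (nneseries_lim_ge (off n.+1) _); last first.
  by move=> k _ _; rewrite mule_ge0 // lee_fin; case/andP: (mixture_weight_in01 k).
under eq_bigr do rewrite cylpE -EFinM.
rewrite sumEFin big_mkord lee_fin /off offsetS big_split_ord /=.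
apply: ler_wpDl; first apply: sumr_ge0 => k _.
  by rewrite mulr_ge0 ?cylp_ge0 //; case/andP: (mixture_weight_in01 k).
rewrite /mixp mulr_sumr; apply: ler_sum => j _.
rewrite /mixture_weight series_weight_offsetD // series_comp_offsetD //.
rewrite mulrA ler_wpM2r ?cylp_ge0 //.
rewrite ler_pdivlMr ?normalizer_gt0 // ler_piMr ?normalizer_le1 //.
by case: (DC n) => _ w_ge0 _; apply: mulr_ge0; [exact/ltW/W_gt0 | exact: w_ge0].
Qed.

End SeriesMixture.

Lemma sum_log2_div_scale (R : realType) (I : finType) (A : pred I)
    (m r q : I -> R) w :
  0 < w -> (forall i, A i -> 0 < r i /\ 0 < q i) ->
  \sum_(i | A i) m i * log2 R (r i / (w * q i)) =
  (\sum_(i | A i) m i * ln (r i / q i) + (\sum_(i | A i) m i) * ln w^-1) / ln 2.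
Proof.
move=> w_gt0 rq_gt0; rewrite mulr_suml -big_split /= mulr_suml.
apply: eq_bigr => i Ai.
have [r_gt0 q_gt0] := rq_gt0 i Ai.
rewrite (_ : r i / (w * q i) = r i / q i * w^-1); last by field; rewrite !gt_eqF.
by rewrite /log2 lnM ?posrE ?divr_gt0 ?invr_gt0 //; ring.
Qed.

Section LogLoss.
Context {R : realType} {X : finType} {x0 : X}.
Local Notation P := (probability (Xinf X x0) R).

Lemma kl_term_le_add (m r v a : R) : 0 < m -> 0 < r -> 0 < a <= v ->
  (kl_term R m v <= kl_term R m r + (m * log2 R (r / a))%:E)%E.
Proof.
move=> m_gt0 r_gt0 /andP[a_gt0 a_le]; have v_gt0 := lt_le_trans a_gt0 a_le.
rewrite /kl_term !gt_eqF // -EFinD lee_fin -mulrDr.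
apply: ler_wpM2l; first exact: ltW.
rewrite /log2 -mulrDl ler_pM2r ?invr_gt0 ?ln_gt0 ?ltr1n // -lnM ?posrE ?divr_gt0 //.
rewrite ler_ln ?posrE ?mulr_gt0 ?divr_gt0 ?invr_gt0 // mulrA divfK ?gt_eqF //.
by rewrite ler_pM2l // lef_pV2 ?posrE.
Qed.

Lemma Ln_le_add (mu nu rho : P) n (a : n.-tuple X -> R) :
  (forall x, 0 < cylp R X x0 mu n x -> 0 < cylp R X x0 rho n x ->
     0 < a x <= cylp R X x0 nu n x) ->
  (Ln R X x0 mu nu n <= Ln R X x0 mu rho n +
    (\sum_(x | (0 < cylp R X x0 mu n x) && (0 < cylp R X x0 rho n x))
       cylp R X x0 mu n x * log2 R (cylp R X x0 rho n x / a x))%:E)%E.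
Proof.
move=> a_bounds.
have [[x [mu_x rho_x]]|rho_pos] :=
  pselect (exists x, 0 < cylp R X x0 mu n x /\ cylp R X x0 rho n x = 0).
  suff -> : Ln R X x0 mu rho n = +oo%E by rewrite addye ?leey.
  apply/esum_eqyP; last by exists x; rewrite /kl_term gt_eqF // rho_x eqxx.
  by move=> y _; rewrite /kl_term; case: ifP => // _; case: ifP.
rewrite /Ln -sumEFin [X in (_ + X)%E]big_mkcond -big_split /=.
apply: lee_sum => x _.
have [mu0|mu_x] := eqVneq (cylp R X x0 mu n x) 0.
  by rewrite mu0 ltxx /kl_term eqxx add0e.
have {}mu_x : 0 < cylp R X x0 mu n x by rewrite lt0r mu_x cylp_ge0.
have rho_x : 0 < cylp R X x0 rho n x.
  rewrite lt0r cylp_ge0 andbT; apply/negP => /eqP rho0.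
  by apply: rho_pos; exists x.
by rewrite mu_x rho_x; apply: kl_term_le_add => //; exact: a_bounds.
Qed.

Lemma Ln_le_dominating (mu nu rho : P) n (q : n.-tuple X -> R) (w b : R) :
  0 < w <= 1 ->
  (forall x, 0 < cylp R X x0 mu n x -> 0 < cylp R X x0 rho n x ->
     0 < q x /\ w * q x <= cylp R X x0 nu n x) ->
  \sum_(x | (0 < cylp R X x0 mu n x) && (0 < cylp R X x0 rho n x))
     cylp R X x0 mu n x * ln (cylp R X x0 rho n x / q x) <= b ->
  (Ln R X x0 mu nu n <= Ln R X x0 mu rho n + ((b + ln w^-1) / ln 2)%:E)%E.
Proof.
move=> /andP[w_gt0 w_le1] q_dom cross_le.
have ln2_gt0 : 0 < ln (2 : R) by rewrite ln_gt0 // ltr1n.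
have lnw_ge0 : 0 <= ln w^-1 by rewrite ln_ge0 // invf_ge1.
apply: (le_trans (Ln_le_add mu nu rho n (fun x => w * q x) _)).
  by move=> x mu_x rho_x; have [q_x ->] := q_dom x mu_x rho_x; rewrite mulr_gt0.
apply: leeD2l; rewrite lee_fin sum_log2_div_scale //; last first.
  by move=> x /andP[mu_x rho_x]; have [] := q_dom x mu_x rho_x.
rewrite ler_pM2r ?invr_gt0 //.
have := sum_cylp_le1_sub mu n
  (fun x => (0 < cylp R X x0 mu n x) && (0 < cylp R X x0 rho n x)).
nra.
Qed.

End LogLoss.

Lemma log2_ge0 {R : realType} {x : R} : 1 <= x -> 0 <= log2 R x.
Proof. by move=> x_ge1; rewrite divr_ge0 ?ln_ge0 // ler1n. Qed.

Lemma log2_ge1 {R : realType} {x : R} : 2 <= x -> 1 <= log2 R x.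
Proof.
move=> x_ge2; have ln2_gt0 : 0 < ln (2 : R) by rewrite ln_gt0 // ltr1n.
by rewrite ler_pdivlMr // mul1r ler_ln ?posrE //; lra.
Qed.

Definition stage_weight {R : realType} n : R := ((n + 1) * (n + 2))%:R^-1.

Lemma stage_weight_gt0 {R : realType} n : 0 < stage_weight n :> R.
Proof. by rewrite invr_gt0 ltr0n muln_gt0 !addn_gt0 orbT. Qed.

Lemma sum_stage_weight {R : realType} N :
  \sum_(n < N) stage_weight n = 1 - (N + 1)%:R^-1 :> R.
Proof.
elim: N => [|N ih]; first by rewrite big_ord0 add0n invr1 subrr.
rewrite big_ord_recr /= ih /stage_weight (_ : N.+1 + 1 = N + 2)%N; last by lia.
rewrite natrM !natrD; have N_ge0 := ler0n R N; field.
by rewrite !lt0r_neq0 //; lra.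
Qed.

Lemma stage_weight_le1 {R : realType} n : stage_weight n <= 1 :> R.
Proof. by rewrite invf_le1 ?ler1n ?ltr0n muln_gt0 !addn_gt0 orbT. Qed.

Lemma sum_stage_weight_le1 {R : realType} N :
  \sum_(n < N) stage_weight n <= 1 :> R.
Proof. by rewrite sum_stage_weight lerBlDr lerDl invr_ge0. Qed.

Lemma stage_regret_le {R : realType} n : (2 <= n)%N ->
  (2 + ln (stage_weight n)^-1) / ln 2 <= 2 * log2 R n%:R + 7.
Proof.
move=> n_ge2; have ln2_gt0 : 0 < ln (2 : R) by apply: ln_gt0; lra.
have n_gt0 : 0 < n%:R :> R by rewrite ltr0n; lia.
have ln_weight_le : ln (stage_weight n)^-1 <= ln 2 *+ 3 + ln n%:R *+ 2 :> R.
  rewrite -!lnXn // -lnM ?posrE ?exprn_gt0 //.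
  rewrite ler_ln ?posrE ?invr_gt0 ?stage_weight_gt0 ?mulr_gt0 ?exprn_gt0 //.
  by rewrite /stage_weight invrK -!natrX -natrM ler_nat; nia.
have ln2_ge := ln2_ge_half (R := R).
rewrite /log2 ler_pdivrMr //.
have -> : (2 * (ln n%:R / ln 2) + 7) * ln 2 = 2 * ln n%:R + 7 * ln (2 : R).
  by field; rewrite gt_eqF.
lra.
Qed.

Theorem theorem1 (R : realType) :
  exists c : R, 0 <= c /\
  forall (X : finType) (x0 : X)
         (C : set (probability (Xinf X x0) R)) (rho : probability (Xinf X x0) R),
    C !=set0 ->
    exists (w : nat -> R) (mus : nat -> probability (Xinf X x0) R)
           (nu : probability (Xinf X x0) R),
      (forall k, C (mus k)) /\
      (forall k, 0 <= w k <= 1) /\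
      (forall A : set (Xinf X x0), measurable A ->
         nu A = (\sum_(0 <= k <oo) ((w k)%:E * mus k A))%E) /\
      (forall mu, C mu -> forall n : nat, (2 <= n)%N ->
         (Ln R X x0 mu nu n <= Ln R X x0 mu rho n +
            (8 * log2 R (n%:R : R)
             + c * (log2 R (#|X|%:R : R) + 1) * log2 R (log2 R (n%:R : R))
             + c)%:E)%E).
Proof.
exists 10; split=> // X x0 C rho C0.
have [D DP] := choice (fun n => universal_finite_mixture C rho n C0).
have DC n : mixture_of C (D n) by case: (DP n).
pose W n : R := stage_weight n.
have W_gt0 n : 0 < W n := stage_weight_gt0 n.
have W_le1 N : \sum_(n < N) W n <= 1 := sum_stage_weight_le1 N.
exists (mixture_weight W DC), (series_comp DC), (series_mixture W DC W_gt0).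
split; first exact: series_comp_in.
split; first exact: (mixture_weight_in01 _ _ W_gt0 W_le1).
split; first by move=> A _; exact: (series_mixtureE _ _ W_gt0 W_le1).
move=> mu Cmu n n_ge2; have [d_gt0 cross_le2] := (DP n).2 mu Cmu.
apply: (le_trans (Ln_le_dominating mu _ rho n _ (W n) 2 _ _ cross_le2)).
- by rewrite W_gt0 /W stage_weight_le1.
- move=> x mu_x rho_x; split; first exact: d_gt0.
  exact: (series_mixture_ge _ _ W_gt0 W_le1).
apply: leeD2l; rewrite lee_fin.
have := stage_regret_le (R := R) n n_ge2.
have log2n_ge1 : 1 <= log2 R n%:R by rewrite log2_ge1 // ler_nat.
have alphabet_ge0 : 0 <= log2 R #|X|%:R.
  by rewrite log2_ge0 // ler1n; apply/card_gt0P; exists x0.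
have := mulr_ge0 (addr_ge0 alphabet_ge0 ler01) (log2_ge0 log2n_ge1).
lra.
Qed.
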